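(* $Cond_{AB}$ is not universal: there is an epistemic space $\mathbb{S}$ that is identifiable in the limit but is not identifiable in the limit by $Cond_{AB}$.
   Context: An epistemic space is a pair $\mathbb{S}=(S,\mathcal{O})$ where $S$ is a non-empty, at most countable set of worlds and $\mathcal{O}\subseteq\mathcal{P}(S)$ is a set of observables. A data stream is an infinite sequence $\vec O=(O_0,O_1,\ldots)$ of elements of $\mathcal{O}$; $\vec O[n]=(O_0,\ldots,O_{n-1})$; it is sound for $s$ if $s\in O_n$ for all $n$ and complete for $s$ if every $O\in\mathcal{O}$ with $s\in O$ occurs in it. $\mathbb{S}$ is identifiable in the limit if some learner (map from finite sequences to subsets of $S$) outputs $\{s\}$ on all sufficiently long initial segments of every stream sound and complete for $s$, for every $s\in S$. A plausibility space is $\mathbb{B}=(S,\mathcal{O},\preceq)$, $\preceq$ a total preorder on $S$; $\min_\preceq X$ is the set of $\preceq$-minimal elements of $X$. Conditioning: $Cond_1(\mathbb{B},p)=(S\cap p,\mathcal{O},\preceq\cap((S\cap p)\times(S\cap p)))$. Anchored conditioning: if $Cond_1(\mathbb{B},p)=(S',\mathcal{O},\preceq')$, then $Cond^+_1(\mathbb{B},p)=(S',\mathcal{O},\preceq')$ if $|\min_{\preceq'}S'|=1$, and otherwise $Cond^+_1(\mathbb{B},p)=(\{x\},\mathcal{O},\emptyset)$ for some (randomly chosen) $x\in\min_{\preceq'}S'$. The anchoring-biased method: $Cond_{AB}(\mathbb{B},\lambda)=\mathbb{B}$ and $Cond_{AB}(\mathbb{B},\sigma\cdot p)=Cond^+_1(Cond_{AB}(\mathbb{B},\sigma),\min_{\preceq_{AB}}(S_{AB}\cap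 p))$, where $Cond_{AB}(\mathbb{B},\sigma)=(S_{AB},\mathcal{O},\preceq_{AB})$. Its conjecture on $\sigma$ is the set of minimal worlds of $Cond_{AB}((S,\mathcal{O},\preceq),\sigma)$ (for a one-world space $\{x\}$ this is $\{x\}$). $\mathbb{S}$ is identifiable in the limit by $Cond_{AB}$ if there is a total preorder $\preceq$ on $S$ such that for every $s\in S$, every stream sound and complete for $s$, and every resolution of the random choices, the conjecture on $\vec O[n]$ is $\{s\}$ for all sufficiently large $n$. *)

(* Worlds are natural numbers; an epistemic space is a
   non-empty set S of naturals (hence at most countable) together with a
   family O of subsets of S. *)
From Stdlib Require Import List Arith.

Definition wset := nat -> Prop.
Definition subset (X Y : wset) : Prop := forall x, X x -> Y x.

Definition epistemic_space (S : wset) (O : wset -> Prop) : Prop :=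
  (exists s, S s) /\ (forall X, O X -> subset X S).

Definition stream := nat -> wset.
Definition is_stream (O : wset -> Prop) (st : stream) : Prop :=
  forall n, O (st n).
Definition prefix (st : stream) (n : nat) : list wset :=
  map st (seq 0 n).
Definition sound_for (st : stream) (s : nat) : Prop :=
  forall n, st n s.
Definition complete_for (O : wset -> Prop) (st : stream) (s : nat) : Prop :=
  forall X, O X -> X s -> exists n, st n = X.

Definition is_singleton (X : wset) (s : nat) : Prop :=
  forall x, X x <-> x = s.

Definition identifiable (S : wset) (O : wset -> Prop) : Prop :=
  exists L : list wset -> wset,
    forall s, S s ->
    forall st, is_stream O st -> sound_for st s -> complete_for O st s ->
    exists N, forall n, N <= n -> is_singleton (L (prefix st n)) s.

Definition state := (wset * (nat -> nat -> Prop))%type.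

Definition minset (le : nat -> nat -> Prop) (X : wset) : wset :=
  fun x => X x /\ ~ (exists y, X y /\ le y x /\ ~ le x y).

Definition cond1 (b : state) (p : wset) : state :=
  (fun x => fst b x /\ p x,
   fun x y => snd b x y /\ (fst b x /\ p x) /\ (fst b y /\ p y)).

(** One step of anchored conditioning Cond^+_1 (relational, so that every
    resolution of the random choice is allowed): [cond1plus_step b p b']
    means b' is a possible result of Cond^+_1(b, p).  When the set of
    minimal worlds is empty there is nothing to choose and the conditioned
    space is kept. *)
Definition cond1plus_step (b : state) (p : wset) (b' : state) : Prop :=
  let c := cond1 b p in
  let m := minset (snd c) (fst c) in
  ((exists x, m x /\ forall y, m y -> y = x) /\ b' = c)
  \/ ((exists x y, m x /\ m y /\ x <> y) /\
      exists x, m x /\ b' = ((fun z => z = x), (fun _ _ => False)))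
  \/ ((~ exists x, m x) /\ b' = c).

(** One step of the anchoring-biased method:
    Cond_AB(B, sigma.p) = Cond^+_1(Cond_AB(B,sigma), min (S_AB /\ p)). *)
Definition ab_step (b : state) (p : wset) (b' : state) : Prop :=
  cond1plus_step b (minset (snd b) (fun x => fst b x /\ p x)) b'.

(** A run of Cond_AB on a stream, for some resolution of the random choices:
    run n = Cond_AB(B, st[n]). *)
Definition ab_run (b0 : state) (st : stream) (run : nat -> state) : Prop :=
  run 0 = b0 /\ forall n, ab_step (run n) (st n) (run (S n)).

Definition ab_conj (b : state) : wset := minset (snd b) (fst b).

Definition total_preorder_on (S : wset) (le : nat -> nat -> Prop) : Prop :=
  (forall x y, le x y -> S x /\ S y) /\
  (forall x, S x -> le x x) /\
  (forall x y z, le x y -> le y z -> le x z) /\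
  (forall x y, S x -> S y -> le x y \/ le y x).

Definition identifiable_AB (S : wset) (O : wset -> Prop) : Prop :=
  exists le, total_preorder_on S le /\
    forall s, S s ->
    forall st, is_stream O st -> sound_for st s -> complete_for O st s ->
    forall run, ab_run (S, le) st run ->
    exists N, forall n, N <= n -> is_singleton (ab_conj (run n)) s.

(* The first observation of a data stream may carry no information (here it
   is the whole space).  Cond_AB conditions on the minimal worlds compatible
   with it, so every surviving world is minimal; if two survive, anchoring may
   keep only one of them, and if one is missing it is already gone.  Either
   way some world w of a two-world space is dropped after one step, and since
   Cond_AB only ever shrinks the set of worlds, w is never conjectured again on
   a stream for w that starts with the same observation.  This defeats Cond_AB
   on the worlds {0, 1} with observables {0, 1} and {0}, although a learner
   that checks whether {0} has been observed identifies that space. *)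
From Stdlib Require Import List Lia Classical ClassicalEpsilon.

Lemma cond1plus_step_sub (b : state) (p : wset) (b' : state) :
  cond1plus_step b p b' -> subset (fst b') (fst (cond1 b p)).
Proof.
  intros [[_ ->] | [[_ [x [[Hx _] ->]]] | [_ ->]]]; simpl.
  - intros y Hy; exact Hy.
  - intros y ->; exact Hx.
  - intros y Hy; exact Hy.
Qed.

Lemma cond1plus_step_exists (b : state) (p : wset) :
  exists b', cond1plus_step b p b'.
Proof.
  unfold cond1plus_step.
  set (c := cond1 b p); set (m := minset (snd c) (fst c)).
  destruct (classic (exists x, m x)) as [[x Hx] | Hnone].
  - destruct (classic (forall y, m y -> y = x)) as [Huniq | Hmany].
    + exists c; left; split; [exists x; auto | reflexivity].
    + apply not_all_ex_not in Hmany as [y Hy].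
      apply imply_to_and in Hy as [Hmy Hyx].
      exists ((fun z => z = x), (fun _ _ => False)); right; left.
      split; [exists x, y; auto | exists x; auto].
  - exists c; right; right; auto.
Qed.

Lemma ab_step_sub (b : state) (p : wset) (b' : state) :
  ab_step b p b' -> subset (fst b') (fst b).
Proof.
  intros Hstep x Hx.
  exact (proj1 (cond1plus_step_sub _ _ _ Hstep x Hx)).
Qed.

Lemma cond1_minset_all_minimal (b : state) (p : wset) (x : nat) :
  fst (cond1 b (minset (snd b) p)) x ->
  ab_conj (cond1 b (minset (snd b) p)) x.
Proof.
  intros Hx; split; [exact Hx |].
  intros [y [Hy [[Hyx _] Hxy]]].
  apply (proj2 (proj2 Hx)); exists y.
  split; [exact (proj1 (proj2 Hy)) | split; [exact Hyx |]].
  intros Hxy'; apply Hxy; split; [exact Hxy' | split; assumption].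
Qed.

Lemma ab_step_can_drop (b : state) (p : wset) (x y : nat) :
  x <> y -> exists b', ab_step b p b' /\ (~ fst b' x \/ ~ fst b' y).
Proof.
  intros Hxy; unfold ab_step.
  set (c := cond1 b (minset (snd b) (fun z => fst b z /\ p z))).
  destruct (classic (fst c x /\ fst c y)) as [[Hx Hy] | Hout].
  - exists ((fun z => z = x), (fun _ _ => False)); split; [| right; simpl; auto].
    right; left; split.
    + exists x, y; split; [| split; [| exact Hxy]];
        apply cond1_minset_all_minimal; assumption.
    + exists x; split; [apply cond1_minset_all_minimal; exact Hx | reflexivity].
  - destruct (cond1plus_step_exists b (minset (snd b) (fun z => fst b z /\ p z)))
      as [b' Hstep].
    exists b'; split; [exact Hstep |].
    apply not_and_or in Hout as [Hx | Hy]; [left | right]; intros H;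
      apply cond1plus_step_sub in Hstep; auto.
Qed.

Definition ab_next (b : state) (p : wset) : state :=
  proj1_sig (constructive_indefinite_description _ (cond1plus_step_exists b
    (minset (snd b) (fun x => fst b x /\ p x)))).

Lemma ab_next_step (b : state) (p : wset) : ab_step b p (ab_next b p).
Proof. exact (proj2_sig (constructive_indefinite_description _ _)). Qed.

Fixpoint ab_iter (b : state) (st : stream) (n : nat) : state :=
  match n with
  | 0 => b
  | S n => ab_next (ab_iter b st n) (st n)
  end.

Lemma ab_iter_run (b : state) (st : stream) : ab_run b st (ab_iter b st).
Proof. split; [reflexivity | intros n; apply ab_next_step]. Qed.

Lemma ab_run_cons (b0 b1 : state) (st : stream) (run : nat -> state) :
  ab_step b0 (st 0) b1 -> ab_run b1 (fun n => st (S n)) run ->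
  ab_run b0 st (fun n => match n with 0 => b0 | S k => run k end).
Proof.
  intros Hstep [Hrun0 Hrun]; split; [reflexivity |].
  intros [| n]; [rewrite Hrun0; exact Hstep | apply Hrun].
Qed.

Lemma ab_run_from_step (b0 b1 : state) (st : stream) :
  ab_step b0 (st 0) b1 -> exists run, ab_run b0 st run /\ run 1 = b1.
Proof.
  intros Hstep; eexists; split.
  - exact (ab_run_cons _ _ _ _ Hstep (ab_iter_run b1 (fun n => st (S n)))).
  - reflexivity.
Qed.

Lemma ab_run_sub (b : state) (st : stream) (run : nat -> state) (m n : nat) :
  ab_run b st run -> m <= n -> subset (fst (run n)) (fst (run m)).
Proof.
  intros [_ Hrun] Hmn; induction Hmn as [| n _ IH]; intros x Hx; [exact Hx |].
  exact (IH x (ab_step_sub _ _ _ (Hrun n) x Hx)).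
Qed.

Lemma ab_run_not_converge (b : state) (st : stream) (run : nat -> state)
    (m : nat) (s : nat) :
  ab_run b st run -> ~ fst (run m) s ->
  ~ exists N, forall n, N <= n -> is_singleton (ab_conj (run n)) s.
Proof.
  intros Hrun Hs [N HN].
  destruct (proj2 (HN (N + m) ltac:(lia) s) eq_refl) as [Hin _].
  exact (Hs (ab_run_sub _ _ _ m (N + m) Hrun ltac:(lia) s Hin)).
Qed.

Theorem not_identifiable_AB_of_same_first_observation
    (S : wset) (O : wset -> Prop) (x y : nat) (stx sty : stream) :
  x <> y -> S x -> S y ->
  is_stream O stx -> sound_for stx x -> complete_for O stx x ->
  is_stream O sty -> sound_for sty y -> complete_for O sty y ->
  stx 0 = sty 0 ->
  ~ identifiable_AB S O.
Proof.
  intros Hxy Sx Sy Ox Soundx Compx Oy Soundy Compy Hfirst [le [_ Hid]].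
  destruct (ab_step_can_drop (S, le) (stx 0) x y Hxy) as [b1 [Hstep [Hx | Hy]]].
  - destruct (ab_run_from_step _ _ _ Hstep) as [run [Hrun Hrun1]].
    apply (ab_run_not_converge _ _ _ 1 x Hrun); [rewrite Hrun1; exact Hx |].
    exact (Hid x Sx stx Ox Soundx Compx run Hrun).
  - rewrite Hfirst in Hstep.
    destruct (ab_run_from_step _ _ _ Hstep) as [run [Hrun Hrun1]].
    apply (ab_run_not_converge _ _ _ 1 y Hrun); [rewrite Hrun1; exact Hy |].
    exact (Hid y Sy sty Oy Soundy Compy run Hrun).
Qed.

Lemma in_prefix (st : stream) (n : nat) (X : wset) :
  In X (prefix st n) <-> exists k, k < n /\ st k = X.
Proof.
  unfold prefix; rewrite in_map_iff; split.
  - intros [k [Hk Hin]]; apply in_seq in Hin; exists k; split; [lia | exact Hk].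
  - intros [k [Hk HX]]; exists k; split; [exact HX | apply in_seq; lia].
Qed.

Definition S2 : wset := fun x => x = 0 \/ x = 1.
Definition Z0 : wset := fun x => x = 0.
Definition O2 (X : wset) : Prop := X = S2 \/ X = Z0.

Definition stream1 : stream := fun _ => S2.
Definition stream0 : stream := fun n => match n with 0 => S2 | _ => Z0 end.

Definition learner2 (l : list wset) : wset :=
  fun x => (In Z0 l /\ x = 0) \/ (~ In Z0 l /\ x = 1).

Lemma epistemic_space_S2 : epistemic_space S2 O2.
Proof.
  split; [exists 0; left; reflexivity |].
  intros X [-> | ->] x Hx; [exact Hx | left; exact Hx].
Qed.

Lemma identifiable_S2 : identifiable S2 O2.
Proof.
  exists learner2; intros s [-> | ->] st _ Hsound Hcomp.
  - destruct (Hcomp Z0 (or_intror eq_refl) eq_refl) as [k Hk].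
    exists (S k); intros n Hn x.
    assert (HZ0 : In Z0 (prefix st n)) by (apply in_prefix; exists k; split; [lia | exact Hk]).
    unfold learner2; split; [intros [[_ H] | [H _]]; [exact H | contradiction] |].
    intros ->; left; auto.
  - exists 0; intros n _ x.
    assert (HZ0 : ~ In Z0 (prefix st n)).
    { intros [k [_ Hk]]%in_prefix; specialize (Hsound k); rewrite Hk in Hsound.
      discriminate Hsound. }
    unfold learner2; split; [intros [[H _] | [_ H]]; [contradiction | exact H] |].
    intros ->; right; auto.
Qed.

Lemma stream1_sound_complete :
  is_stream O2 stream1 /\ sound_for stream1 1 /\ complete_for O2 stream1 1.
Proof.
  split; [intros n; left; reflexivity | split; [intros n; right; reflexivity |]].
  intros X [-> | ->] HX; [exists 0; reflexivity | discriminate HX].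
Qed.

Lemma stream0_sound_complete :
  is_stream O2 stream0 /\ sound_for stream0 0 /\ complete_for O2 stream0 0.
Proof.
  split; [intros [| n]; [left | right]; reflexivity |].
  split; [intros [| n]; [left |]; reflexivity |].
  intros X [-> | ->] _; [exists 0 | exists 1]; reflexivity.
Qed.

Theorem mainTheorem6 :
  exists (S : wset) (O : wset -> Prop),
    epistemic_space S O /\ identifiable S O /\ ~ identifiable_AB S O.
Proof.
  exists S2, O2; split; [exact epistemic_space_S2 | split; [exact identifiable_S2 |]].
  destruct stream0_sound_complete as [O0 [Sound0 Comp0]].
  destruct stream1_sound_complete as [O1 [Sound1 Comp1]].
  apply (not_identifiable_AB_of_same_first_observation S2 O2 0 1 stream0 stream1);
    auto; [left | right]; reflexivity.
Qed.
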